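(* Regarded as a subset of $\mathbb{RP}^1\times\mathbb{RP}^2$, the space of half-flat structures, namely $\{([x_1u_1+x_2u_2],[y_1u_1^2+y_2u_1u_2+y_3u_2^2])\colon x_1y_2+x_2(y_1-y_3)=0\}$, is (via projection onto the second factor) the blow-up of $\mathbb{RP}^2$ at $[1:0:1]$. In particular, it is connected. The points projecting onto $[1:0:1]$ correspond to Hermitian structures on $\mathfrak{so}(3,\mathbb C)$.
   Context: A pair $([\mathbf x],[\mathbf y])\in\mathbb{RP}^1\times\mathbb{RP}^2$ with $\mathbf x=x_1u_1+x_2u_2$, $\mathbf y=y_1u_1^2+y_2u_1u_2+y_3u_2^2$ determines the Lie algebra with basis $e^1,\dots,e^6$ of its dual satisfying ($e^{ij}=e^i\wedge e^j$) $de^1=(x_2y_1-x_1y_2)e^{35}-x_1y_3(e^{36}+e^{45})-x_2y_3e^{46}$, $de^3=-(x_2y_1-x_1y_2)e^{15}+x_1y_3(e^{16}+e^{25})+x_2y_3e^{26}$, $de^5=(x_2y_1-x_1y_2)e^{13}-x_1y_3(e^{14}+e^{23})-x_2y_3e^{24}$, $de^2=x_1y_1e^{35}-(x_1y_3-y_2x_2)e^{46}+x_2y_1(e^{36}+e^{45})$, $de^4=-x_1y_1e^{15}+(x_1y_3-y_2x_2)e^{26}-x_2y_1(e^{16}+e^{25})$, $de^6=x_1y_1e^{13}-(x_1y_3-y_2x_2)e^{24}+x_2y_1(e^{14}+e^{23})$, together with the left-invariant $SO(3)$-structure and $SU(3)$-structure defined by the coframe: $\sigma=e^{12}+e^{34}+e^{56}$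 and $\gamma=\tfrac43(\eta_0+\eta_1+\eta_2)$, where $\eta_j=\eta^{\theta_j}$, $\theta_j\in\{0,2\pi/3,-2\pi/3\}$, $\eta^\theta=(\cos\theta\, e^1+\sin\theta\, e^2)\wedge(\cos\theta\, e^3+\sin\theta\, e^4)\wedge(\cos\theta\, e^5+\sin\theta\, e^6)$; $\hat\gamma=J\gamma$. Its intrinsic torsion parameters are $\lambda_1=x_1y_1$, $\lambda_2=x_1y_2+x_2y_1$, $\lambda_3=x_1y_3+x_2y_2$, $\lambda_4=x_2y_3$ (with $d\hat\gamma=\tfrac12(\lambda_3-\lambda_1)\sigma^2$ and $d\sigma=\tfrac34(\lambda_1-\lambda_3)\gamma+\tfrac34(\lambda_2-\lambda_4)\hat\gamma+\beta$, $\beta$ a form of type $W_3$). The $SU(3)$-structure is half-flat if $d(\sigma^2)=0$ and $d\gamma=0$, which here means $\lambda_2=\lambda_4$; it is Hermitian if moreover $\lambda_1=\lambda_3$. *)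

From HB Require Import structures.
From mathcomp Require Import all_boot all_order all_algebra.
From mathcomp Require Import all_classical all_reals all_analysis.
From mathcomp Require Import complex ring generic_quotient.

Set Implicit Arguments. Unset Strict Implicit. Unset Printing Implicit Defensive.
Import Order.TTheory GRing.Theory Num.Theory.
Import numFieldNormedType.Exports.
Local Open Scope classical_set_scope.
Local Open Scope ring_scope.

Section Proj.
Variable R : realType.

Definition nzvec (n : nat) := set_type [set x : 'rV[R]_n.+1 | x != 0].

(** Proportionality of nonzero vectors: all 2x2 minors vanish. *)
Definition proprel n : rel (nzvec n) := fun x y =>
  [forall i, [forall j, val x 0 i * val y 0 j == val x 0 j * val y 0 i]].

Lemma proprel_refl n : reflexive (@proprel n).
Proof. by move=> x; apply/forallP => i; apply/forallP => j; rewrite mulrC. Qed.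

Lemma proprel_sym n : symmetric (@proprel n).
Proof.
move=> x y; apply/idP/idP => /forallP H; apply/forallP => i; apply/forallP => j;
  by move/forallP: (H i) => /(_ j) /eqP E; rewrite mulrC -E mulrC.
Qed.

Lemma proprel_trans n : transitive (@proprel n).
Proof.
move=> y x z /forallP Hxy /forallP Hyz; apply/forallP => i; apply/forallP => j.
have /existsP [k yk] : [exists k, val y 0 k != 0].
  apply: contraT; rewrite negb_exists => /forallP H.
  suff E : val y = 0 by have := set_valP y; rewrite /= E eqxx.
  by apply/matrixP => a l; rewrite mxE (ord1 a); apply/eqP/negPn/H.
have E1 l : val x 0 l * val y 0 k = val x 0 k * val y 0 l.
  by move/forallP: (Hxy l) => /(_ k) /eqP.
have E2 l : val y 0 k * val z 0 l = val y 0 l * val z 0 k.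
  by move/forallP: (Hyz k) => /(_ l) /eqP.
apply/eqP; apply: (mulIf (mulf_neq0 yk yk)).
have -> : val x 0 i * val z 0 j * (val y 0 k * val y 0 k) =
  (val x 0 i * val y 0 k) * (val y 0 k * val z 0 j) by ring.
have -> : val x 0 j * val z 0 i * (val y 0 k * val y 0 k) =
  (val x 0 j * val y 0 k) * (val y 0 k * val z 0 i) by ring.
by rewrite !E1 !E2; ring.
Qed.

Definition projequiv n := EquivRel (@proprel n) (@proprel_refl n)
  (@proprel_sym n) (@proprel_trans n).

Definition RP (n : nat) : Type := quotient_topology {eq_quot (projequiv n)}%qT.

(** Homogeneous coordinates (0-based) of a chosen representative. *)
Definition hc n (q : RP n) (i : 'I_n.+1) : R := val (repr q : nzvec n) 0 i.

Definition hcn n (q : RP n) (i : nat) : R := hc q (inord i).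

(** x = x_1 u_1 + x_2 u_2 in RP^1, y = y_1 u_1^2 + y_2 u_1 u_2 + y_3 u_2^2 in RP^2;
    z = ([x],[y]) in RP^1 x RP^2.  Coordinates of chosen representatives: *)
Definition x1 (z : RP 1 * RP 2) := hcn z.1 0.
Definition x2 (z : RP 1 * RP 2) := hcn z.1 1.
Definition y1 (z : RP 1 * RP 2) := hcn z.2 0.
Definition y2 (z : RP 1 * RP 2) := hcn z.2 1.
Definition y3 (z : RP 1 * RP 2) := hcn z.2 2.

(** The space of half-flat structures, as in the statement:
    { ([x],[y]) : x1 y2 + x2 (y1 - y3) = 0 }  (this equation is homogeneous,
    so it does not depend on the representatives). *)
Definition halfflat_set : set (RP 1 * RP 2) :=
  [set z | x1 z * y2 z + x2 z * (y1 z - y3 z) = 0].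

Definition lam1 z := x1 z * y1 z.
Definition lam2 z := x1 z * y2 z + x2 z * y1 z.
Definition lam3 z := x1 z * y3 z + x2 z * y2 z.
Definition lam4 z := x2 z * y3 z.

Definition halfflat_cond (z : RP 1 * RP 2) : Prop := lam2 z = lam4 z.
Definition hermitian_str (z : RP 1 * RP 2) : Prop := lam2 z = lam4 z /\ lam1 z = lam3 z.

(** The point [1:0:1] of RP^2 (a point [y] equals [1:0:1] iff y_2 = 0 and y_1 = y_3). *)
Definition is_p101 (q : RP 2) : Prop := hcn q 1 = 0 /\ hcn q 0 = hcn q 2.

(** Standard model of the blow-up of RP^2 at [1:0:1]: the closure of the graph
    of the projection from [1:0:1], [y] |-> [l1(y) : l2(y)], where
    l1 = y_2, l2 = y_1 - y_3 are linear forms cutting out [1:0:1]: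
    Bl = { ([a0:a1],[y]) in RP^1 x RP^2 : a0 * l2(y) = a1 * l1(y) },
    with the blow-down map being the projection onto the second factor. *)
Definition blowup101 : set (RP 1 * RP 2) :=
  [set z | hcn z.1 0 * (hcn z.2 0 - hcn z.2 2) = hcn z.1 1 * hcn z.2 1].

(** Projective transformation of RP^n induced by a matrix M acting on row
    vectors: [v] |-> [v M] (for invertible M this is well defined). *)
Definition projmap n (M : 'M[R]_n.+1) (q : RP n) : RP n :=
  match (insub (val (repr q : nzvec n) *m M) : option (nzvec n)) with
  | Some w => (\pi_(RP n) w)%qT
  | None => q
  end.

(** The Lie algebra g_(x,y) on R^6 (basis e_1..e_6, dual basis e^1..e^6),
    defined by the differentials d e^k of the statement, with the convention
    d alpha (u, v) = - alpha([u, v]).  [E a b] is the 2-form e^a /\ e^b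
    (1-based indices), as an antisymmetric bilinear form on coordinates. *)
Definition E (a b : nat) (i j : 'I_6) : R :=
  ((val i == a.-1) && (val j == b.-1))%:R - ((val i == b.-1) && (val j == a.-1))%:R.

Definition de (X1 X2 Y1 Y2 Y3 : R) (k : 'I_6) (i j : 'I_6) : R :=
  let al := X2 * Y1 - X1 * Y2 in
  let be := X1 * Y3 in
  let ga := X2 * Y3 in
  let dl := X1 * Y1 in
  let ep := X1 * Y3 - Y2 * X2 in
  let ze := X2 * Y1 in
  match val k with
  | 0 => al * E 3 5 i j - be * (E 3 6 i j + E 4 5 i j) - ga * E 4 6 i j
  | 1 => dl * E 3 5 i j - ep * E 4 6 i j + ze * (E 3 6 i j + E 4 5 i j)
  | 2 => - al * E 1 5 i j + be * (E 1 6 i j + E 2 5 i j) + ga * E 2 6 i j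
  | 3 => - dl * E 1 5 i j + ep * E 2 6 i j - ze * (E 1 6 i j + E 2 5 i j)
  | 4 => al * E 1 3 i j - be * (E 1 4 i j + E 2 3 i j) - ga * E 2 4 i j
  | _ => dl * E 1 3 i j - ep * E 2 4 i j + ze * (E 1 4 i j + E 2 3 i j)
  end.

Definition lie_bracket (X1 X2 Y1 Y2 Y3 : R) (u v : 'rV[R]_6) : 'rV[R]_6 :=
  \row_k (- \sum_i \sum_j de X1 X2 Y1 Y2 Y3 k i j * u 0 i * v 0 j).

Local Open Scope complex_scope.
Definition so3C : set 'M[R[i]]_3 := [set A | A^T = - A].

Definition iso_so3C (br : 'rV[R]_6 -> 'rV[R]_6 -> 'rV[R]_6) : Prop :=
  exists phi : 'rV[R]_6 -> 'M[R[i]]_3,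
    [/\ forall (a : R) u v, phi (a *: u + v) = a%:C *: phi u + phi v,
        injective phi,
        forall u, so3C (phi u),
        forall A, so3C A -> exists u, phi u = A &
        forall u v, phi (br u v) = phi u *m phi v - phi v *m phi u].
End Proj.

(* Half-flatness lambda_2 = lambda_4 is the bihomogeneous equation
   x1 y2 + x2 (y1 - y3) = 0.  For fixed [x] it cuts out the line of RP^2 through
   [1:0:1] and [x1 : -x2 : 0], and rotating the RP^1 factor by a quarter turn
   turns it into the equation a0 (y1 - y3) = a1 y2 of the blow-up at [1:0:1].
   The half-flat space is connected: it is the union of these lines, each of
   which is connected and meets the connected exceptional curve
   RP^1 x {[1:0:1]}.
   Over [1:0:1] Hermitian structures are characterised because
   (lambda_2 - lambda_4, lambda_1 - lambda_3) is the image of (y2, y1 - y3)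
   under the invertible matrix ((x1, x2), (-x2, x1)).
   At y = (c, 0, c) the structure constants say that the complex coordinates
   z_k = e^(2k+1) + i e^(2k+2) turn the bracket into m times the cross product
   of C^3, with m = - c (x2 + i x1) <> 0; the hat map then identifies
   (C^3, m x) with so(3, C). *)

From HB Require Import structures.
From mathcomp Require Import all_boot all_order all_algebra.
From mathcomp Require Import all_classical all_reals all_analysis.
From mathcomp Require Import complex ring lra generic_quotient.
Import Order.TTheory GRing.Theory Num.Theory.
Import numFieldNormedType.Exports.
Local Open Scope classical_set_scope.
Local Open Scope ring_scope.
Set Implicit Arguments. Unset Strict Implicit. Unset Printing Implicit Defensive.

Local Open Scope complex_scope.
Local Notation o2 k := (@Ordinal 2 k isT).
Local Notation o3 k := (@Ordinal 3 k isT).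
Local Notation o6 k := (@Ordinal 6 k isT).

Section ProjectiveCoordinates.
Variable R : realType.
Local Open Scope quotient_scope.

Lemma nzvec_neq0 n (p : nzvec R n) : val p != 0.
Proof. by have := set_valP p; rewrite /= => ->. Qed.

Lemma nzvec_coord n (p : nzvec R n) : exists i, val p 0 i != 0.
Proof.
apply/existsP; apply: contraT; rewrite negb_exists => /forallP p0.
suff val_p0 : val p = 0 by move: (nzvec_neq0 p); rewrite val_p0 eqxx.
by apply/matrixP => a i; rewrite mxE (ord1 a); apply/eqP/negPn/p0.
Qed.

Lemma proprel_scale n (p v : nzvec R n) : proprel p v ->
  exists2 l : R, l != 0 & val p = l *: val v.
Proof.
move=> /forallP pv; have [k vk] := nzvec_coord v.
have pvk i : val p 0 i * val v 0 k = val p 0 k * val v 0 i.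
  by move/forallP: (pv i) => /(_ k) /eqP.
exists (val p 0 k / val v 0 k).
  rewrite mulf_neq0 ?invr_eq0 //; apply: contraT => /negPn /eqP pk0.
  have [i pi] := nzvec_coord p; move: (pvk i); rewrite pk0 mul0r.
  by move/eqP; rewrite mulf_eq0 (negbTE pi) (negbTE vk).
apply/matrixP => a i; rewrite (ord1 a) !mxE; apply: (mulIf vk).
by rewrite pvk; field.
Qed.

Lemma scale_proprel n (p v : nzvec R n) (l : R) : val p = l *: val v -> proprel p v.
Proof.
move=> pv; apply/forallP => i; apply/forallP => j.
by rewrite pv !mxE; apply/eqP; ring.
Qed.

Lemma pi_RP_eqP n (p v : nzvec R n) :
  \pi_(RP R n) p = \pi_(RP R n) v <-> proprel p v.
Proof. by split=> [/eqquotP | pv]; last apply/eqquotP. Qed.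

Lemma pi_RP_scale n (p v : nzvec R n) (l : R) :
  val p = l *: val v -> \pi_(RP R n) p = \pi_(RP R n) v.
Proof. by move=> /scale_proprel/pi_RP_eqP. Qed.

Lemma repr_pi_RP n (p : nzvec R n) :
  exists2 l : R, l != 0 & val (repr (\pi_(RP R n) p)) = l *: val p.
Proof. by apply/proprel_scale/pi_RP_eqP; rewrite reprK. Qed.

Lemma hcnE n (q : RP R n) (i : 'I_n.+1) : hcn q i = val (repr q) 0 i.
Proof. by rewrite /hcn /hc inord_val. Qed.

Lemma hcn_pi_RP n (p : nzvec R n) :
  exists2 l : R, l != 0 & forall i : 'I_n.+1, hcn (\pi_(RP R n) p) i = l * val p 0 i.
Proof.
have [l l_neq0 pE] := repr_pi_RP p.
by exists l => // i; rewrite hcnE pE mxE.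
Qed.

Lemma RP1_coord_neq0 (x : RP R 1) : (hcn x 0 != 0) || (hcn x 1 != 0).
Proof.
have [[[|[|//]] i_lt] xi] := nzvec_coord (repr x); rewrite -hcnE /= in xi.
  by rewrite xi.
by rewrite xi orbT.
Qed.

Lemma RP2_coord_neq0 (y : RP R 2) : [|| hcn y 0 != 0, hcn y 1 != 0 | hcn y 2 != 0].
Proof.
have [[[|[|[|//]]] i_lt] yi] := nzvec_coord (repr y); rewrite -hcnE /= in yi.
- by rewrite yi.
- by rewrite yi orbT.
- by rewrite yi !orbT.
Qed.

End ProjectiveCoordinates.

Section Blowup.
Variable R : realType.
Local Open Scope quotient_scope.

Lemma projmap_unitmx n (M : 'M[R]_n.+1) (q : RP R n) : M \in unitmx ->
  exists2 w : nzvec R n, projmap M q = \pi_(RP R n) w & val w = val (repr q) *m M.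
Proof.
move=> M_unit; rewrite /projmap; case: insubP => [w _ wE | ]; first by exists w.
rewrite notin_setE /= => /negP/negPn/eqP qM0.
have := nzvec_neq0 (repr q).
by rewrite -(mulmxK M_unit (val (repr q))) qM0 mul0mx eqxx.
Qed.

Definition rot90 : 'M[R]_2 :=
  \matrix_(i < 2, j < 2) (((i == 1 :> nat) && (j == 0 :> nat))%:R
                          - ((i == 0 :> nat) && (j == 1 :> nat))%:R).

Lemma rot90_mul (u : 'rV[R]_2) :
  (u *m rot90) 0 0 = u 0 1 /\ (u *m rot90) 0 1 = - u 0 0.
Proof.
rewrite !mxE !big_ord_recl !big_ord0 !mxE /=.
have -> : lift ord0 ord0 = 1 :> 'I_2 by apply: val_inj.
have -> : ord0 = 0 :> 'I_2 by apply: val_inj.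
by split; ring.
Qed.

Lemma rot90_unitmx : rot90 \in unitmx.
Proof.
have rot90_sqr : rot90 *m - rot90 = 1%:M.
  apply/matrixP => i j; rewrite !mxE !big_ord_recl big_ord0 !mxE /=.
  by case: i => [[|[|//]] ?]; case: j => [[|[|//]] ?] /=; ring.
by case: (mulmx1_unit rot90_sqr).
Qed.

Lemma hcn_projmap_rot90 (q : RP R 1) : exists2 l : R, l != 0 &
  hcn (projmap rot90 q) 0 = l * hcn q 1 /\ hcn (projmap rot90 q) 1 = - (l * hcn q 0).
Proof.
have [w -> wE] := projmap_unitmx q rot90_unitmx.
have [l l_neq0 hcn_w] := hcn_pi_RP w.
exists l => //; rewrite (hcn_w 0) (hcn_w 1) wE.
have [-> ->] := rot90_mul (val (repr q)).
by rewrite -(hcnE q 0) -(hcnE q 1) mulrN.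
Qed.

Lemma halfflat_blowup101 (z : RP R 1 * RP R 2) :
  halfflat_set z <-> blowup101 (projmap rot90 z.1, z.2).
Proof.
case: z => q y; rewrite /halfflat_set /blowup101 /x1 /x2 /y1 /y2 /y3 /=.
have [l l_neq0 [-> ->]] := hcn_projmap_rot90 q.
have factor : l * hcn q 1 * (hcn y 0 - hcn y 2) - - (l * hcn q 0) * hcn y 1 =
  l * (hcn q 0 * hcn y 1 + hcn q 1 * (hcn y 0 - hcn y 2)) by ring.
split=> [hf | bl]; apply/eqP.
  by rewrite -subr_eq0 factor hf mulr0.
by move: factor; rewrite bl subrr => /esym/eqP; rewrite mulf_eq0 (negbTE l_neq0).
Qed.

End Blowup.

Section Connectedness.
Variable R : realType.
Local Open Scope quotient_scope.

Lemma connected_continuous_image (T U : topologicalType) (A : set T) (f : T -> U) :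
  connected A -> continuous f -> connected (f @` A).
Proof.
by move=> A_conn f_cont; apply: connected_continuous_connected => //; apply: continuous_subspaceT.
Qed.

Lemma connected_range (U : topologicalType) (f : R -> U) :
  continuous f -> connected (range f).
Proof.
by apply: connected_continuous_image; apply/connected_intervalP => x y _ _ z _.
Qed.

Lemma continuous_pair (T U V : topologicalType) (f : T -> U) (g : T -> V) :
  continuous f -> continuous g -> continuous (fun t => (f t, g t)).
Proof. by move=> f_cont g_cont t; apply: cvg_pair; [exact: f_cont | exact: g_cont]. Qed.

Definition mknz n (v : 'rV[R]_n.+1) (v_neq0 : v != 0) : nzvec R n :=
  exist _ v (mem_set v_neq0).

Lemma continuous_pi_mknz n (g : R -> 'rV[R]_n.+1) (g_neq0 : forall t, g t != 0) :
  continuous g -> continuous (fun t => \pi_(RP R n) (mknz (g_neq0 t))).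
Proof.
move=> g_cont t; apply: (@continuous_comp _ _ _ (fun t => mknz (g_neq0 t))).
  exact: (@continuous_comp_initial _ _ _ (@set_val _ [set x : 'rV[R]_n.+1 | x != 0])).
exact: pi_continuous.
Qed.

Definition proj_line n (v w : 'rV[R]_n.+1) : set (RP R n) :=
  [set q | exists a b, val (repr q) = a *: v + b *: w].

Lemma connected_proj_line n (v w : 'rV[R]_n.+1) :
  (forall a b, a *: v + b *: w = 0 -> a = 0 /\ b = 0) -> connected (proj_line v w).
Proof.
move=> vw_indep.
have comb_neq0 a b : (a != 0) || (b != 0) -> a *: v + b *: w != 0.
  apply: contraTneq => /vw_indep[-> ->]; by rewrite eqxx.
have comb_cont (f g : R -> R) : continuous f -> continuous g ->
    continuous (fun t => f t *: v + g t *: w).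
  by move=> f_cont g_cont t; apply: cvgD; apply: cvgZr_tmp; [exact: f_cont | exact: g_cont].
have neq0_l t : t *: v + 1 *: w != 0 by rewrite comb_neq0 // oner_neq0 orbT.
have neq0_r t : 1 *: v + t *: w != 0 by rewrite comb_neq0 // oner_neq0.
pose chart_l t := \pi_(RP R n) (mknz (neq0_l t)).
pose chart_r t := \pi_(RP R n) (mknz (neq0_r t)).
have chart_l_cont : continuous chart_l := continuous_pi_mknz
  (g_neq0 := neq0_l) (comb_cont id (fun=> 1) (fun=> cvg_id) (@cst_continuous R R 1)).
have chart_r_cont : continuous chart_r := continuous_pi_mknz
  (g_neq0 := neq0_r) (comb_cont (fun=> 1) id (@cst_continuous R R 1) (fun=> cvg_id)).
have -> : proj_line v w = range chart_l `|` range chart_r.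
  apply/seteqP; split=> [q [a [b qE]] | q [[t _ <-] | [t _ <-]]].
  - have [a0 | a_neq0] := eqVneq a 0.
      have b_neq0 : b != 0.
        apply: contraNneq (nzvec_neq0 (repr q)) => b0.
        by rewrite qE a0 b0 !scale0r addr0.
      left; exists (a / b) => //; rewrite -[RHS]reprK; apply/esym/(pi_RP_scale (l := b)).
      by rewrite qE /= scalerDr !scalerA mulr1 mulrC divfK.
    right; exists (b / a) => //; rewrite -[RHS]reprK; apply/esym/(pi_RP_scale (l := a)).
    by rewrite qE /= scalerDr !scalerA mulr1 mulrC divfK.
  - by have [l _ lE] := repr_pi_RP (mknz (neq0_l t)); exists (l * t), l;
      rewrite lE scalerDr !scalerA mulr1.
  - by have [l _ lE] := repr_pi_RP (mknz (neq0_r t)); exists l, (l * t);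
      rewrite lE scalerDr !scalerA mulr1.
apply: connectedU (connected_range chart_l_cont) (connected_range chart_r_cont).
exists (chart_l 1); split; first by exists 1.
by exists 1 => //; rewrite /chart_l /chart_r; congr \pi_(RP R n); apply: val_inj.
Qed.

End Connectedness.

Lemma line_through_101 (K : fieldType) (X0 X1 Y0 Y1 Y2 : K) : (X0 != 0) || (X1 != 0) ->
  X0 * Y1 + X1 * (Y0 - Y2) = 0 -> exists b, Y0 = Y2 + b * X0 /\ Y1 = - (b * X1).
Proof.
move=> X_neq0 e; have [X1_0 | X1_neq0] := eqVneq X1 0.
  have X0_neq0 : X0 != 0 by move: X_neq0; rewrite X1_0 eqxx orbF.
  move: e; rewrite X1_0 mul0r addr0 => /eqP; rewrite mulf_eq0 (negbTE X0_neq0) => /eqP ->.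
  by exists ((Y0 - Y2) / X0); split; [field | ring].
have e' : X1 * (Y0 - Y2) = - (X0 * Y1) by apply/eqP; rewrite -addr_eq0 addrC e.
exists (- Y1 / X1); split; last by field.
rewrite -[Y0](addrNK Y2) addrC; congr (_ + _); apply: (mulfI X1_neq0).
by rewrite e'; field.
Qed.

Section HalfflatConnected.
Variable R : realType.
Local Open Scope quotient_scope.

Definition e10 : 'rV[R]_2 := \row_j [:: 1; 0]`_j.
Definition e01 : 'rV[R]_2 := \row_j [:: 0; 1]`_j.
Definition e101 : 'rV[R]_3 := \row_j [:: 1; 0; 1]`_j.

Definition halfflat_dir (x : RP R 1) : 'rV[R]_3 := \row_j [:: hcn x 0; - hcn x 1; 0]`_j.

Lemma e10_neq0 : e10 != 0.
Proof. by apply/eqP => /matrixP/(_ 0 (o2 0)); rewrite !mxE; apply/eqP/oner_neq0. Qed.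

Lemma e101_neq0 : e101 != 0.
Proof. by apply/eqP => /matrixP/(_ 0 (o3 0)); rewrite !mxE; apply/eqP/oner_neq0. Qed.

Definition pt10 : RP R 1 := \pi_(RP R 1) (mknz e10_neq0).
Definition pt101 : RP R 2 := \pi_(RP R 2) (mknz e101_neq0).

Lemma RP1_proj_line : [set: RP R 1] = proj_line e10 e01.
Proof.
apply/seteqP; split=> // x _; exists (hcn x 0), (hcn x 1).
apply/matrixP => i j; rewrite (ord1 i) !mxE -hcnE.
by case: j => [[|[|//]] ?] /=; ring.
Qed.

Lemma connected_RP1 : connected [set: RP R 1].
Proof.
rewrite RP1_proj_line; apply: connected_proj_line => a b /matrixP e.
by move: (e 0 (o2 0)) (e 0 (o2 1)); rewrite !mxE /= => e0 e1; split; lra.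
Qed.

Lemma e101_halfflat_dir_indep x a b :
  a *: e101 + b *: halfflat_dir x = 0 -> a = 0 /\ b = 0.
Proof.
move=> /matrixP e; move: (e 0 (o3 0)) (e 0 (o3 1)) (e 0 (o3 2)); rewrite !mxE /=.
rewrite !mulr1 !mulr0 addr0 add0r => e0 e1 a0; rewrite a0 add0r in e0.
split=> //; apply/eqP; apply: contraTT (RP1_coord_neq0 x) => b_neq0.
move: e0 e1 => /eqP; rewrite mulf_eq0 (negbTE b_neq0) => /= /eqP ->.
by move=> /eqP; rewrite mulf_eq0 (negbTE b_neq0) oppr_eq0 => /= /eqP ->; rewrite eqxx.
Qed.

Lemma pt101_proj_line v : proj_line e101 v pt101.
Proof.
have [l _ lE] := repr_pi_RP (mknz e101_neq0).
by exists l, 0; rewrite lE scale0r addr0.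
Qed.

Lemma halfflat_fiber x y : halfflat_set (x, y) <-> proj_line e101 (halfflat_dir x) y.
Proof.
rewrite /halfflat_set /x1 /x2 /y1 /y2 /y3 /=; split.
- move=> /(line_through_101 (RP1_coord_neq0 x)) [b [Y0E Y1E]].
  exists (hcn y 2), b; apply/matrixP => i j; rewrite (ord1 i) !mxE -hcnE.
  by case: j => [[|[|[|//]]] ?] /=; rewrite ?Y0E ?Y1E; ring.
- move=> [a [b yE]].
  rewrite (hcnE y (o3 0)) (hcnE y (o3 1)) (hcnE y (o3 2)) yE !mxE /=; ring.
Qed.

Lemma halfflat_bigcup : @halfflat_set R = \bigcup_(x in setT)
  ((fun q => (q, pt101)) @` setT `|` pair x @` proj_line e101 (halfflat_dir x)).
Proof.
apply/seteqP; split=> [[x y] /halfflat_fiber hf | z [x _ [[q _ <-] | [y y_line <-]]]].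
- by exists x => //; right; exists y.
- exact/halfflat_fiber/pt101_proj_line.
- exact/halfflat_fiber.
Qed.

Lemma connected_halfflat : connected (@halfflat_set R).
Proof.
rewrite halfflat_bigcup; apply: bigcup_connected.
  by exists (pt10, pt101) => x _; left; exists pt10.
move=> x _; apply: connectedU.
- exists (x, pt101); split; first by exists x.
  by exists pt101 => //; exact: pt101_proj_line.
- apply: connected_continuous_image connected_RP1 _.
  exact: (continuous_pair (f := id) (fun=> cvg_id) (@cst_continuous _ _ pt101)).
- apply: connected_continuous_image (connected_proj_line (@e101_halfflat_dir_indep x)) _.
  exact: (continuous_pair (g := id) (@cst_continuous _ _ x) (fun=> cvg_id)).
Qed.

End HalfflatConnected.

Lemma rotation_kernel (K : realDomainType) (a b u v : K) : (a != 0) || (b != 0) ->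
  a * u + b * v = 0 -> a * v - b * u = 0 -> u = 0 /\ v = 0.
Proof.
move=> ab_neq0 e1 e2.
have norm_neq0 : a ^+ 2 + b ^+ 2 != 0.
  rewrite paddr_eq0 ?sqr_ge0 // !sqrf_eq0; apply: contraL ab_neq0.
  by case/andP => /eqP -> /eqP ->; rewrite eqxx.
have u0 : (a ^+ 2 + b ^+ 2) * u = 0.
  have -> : (a ^+ 2 + b ^+ 2) * u = a * (a * u + b * v) - b * (a * v - b * u) by ring.
  by rewrite e1 e2 !mulr0 subrr.
have v0 : (a ^+ 2 + b ^+ 2) * v = 0.
  have -> : (a ^+ 2 + b ^+ 2) * v = b * (a * u + b * v) + a * (a * v - b * u) by ring.
  by rewrite e1 e2 !mulr0 addr0.
move: u0 v0 => /eqP; rewrite mulf_eq0 (negbTE norm_neq0) => /eqP ->.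
by move=> /eqP; rewrite mulf_eq0 (negbTE norm_neq0) => /eqP ->.
Qed.

Lemma halfflat_hermitian (R : realType) (z : RP R 1 * RP R 2) : halfflat_set z ->
  is_p101 z.2 <-> hermitian_str z.
Proof.
rewrite /halfflat_set /is_p101 /hermitian_str /lam1 /lam2 /lam3 /lam4.
rewrite /x1 /x2 /y1 /y2 /y3 => hf.
split=> [[-> ->] | [_ herm]]; first by split; ring.
have herm' : hcn z.1 0 * (hcn z.2 0 - hcn z.2 2) - hcn z.1 1 * hcn z.2 1 = 0.
  by rewrite mulrBr herm; ring.
by have [-> /eqP] := rotation_kernel (RP1_coord_neq0 z.1) hf herm'; rewrite subr_eq0 => /eqP.
Qed.

Section Hat.
Variable K : comNzRingType.

Definition hat (a b c : K) : 'M[K]_3 := \matrix_(i, j)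
  match val i, val j with
  | 0, 1 => - c | 0, 2 => b | 1, 0 => c | 1, 2 => - a | 2, 0 => - b | 2, 1 => a
  | _, _ => 0 end.

Lemma hat_skew a b c : (hat a b c)^T = - hat a b c.
Proof.
apply/matrixP => i j; rewrite !mxE.
by case: i => [[|[|[|//]]] ?]; case: j => [[|[|[|//]]] ?] /=; rewrite ?oppr0 ?opprK.
Qed.

Lemma hat_scale_add s a b c a' b' c' :
  hat (s * a + a') (s * b + b') (s * c + c') = s *: hat a b c + hat a' b' c'.
Proof.
apply/matrixP => i j; rewrite !mxE.
by case: i => [[|[|[|//]]] ?]; case: j => [[|[|[|//]]] ?] /=; ring.
Qed.

Lemma hat_commutator a b c a' b' c' :
  hat a b c *m hat a' b' c' - hat a' b' c' *m hat a b c =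
  hat (b * c' - c * b') (c * a' - a * c') (a * b' - b * a').
Proof.
apply/matrixP => i j; rewrite !mxE !big_ord_recl !big_ord0 !mxE /=.
by case: i => [[|[|[|//]]] ?]; case: j => [[|[|[|//]]] ?] /=; ring.
Qed.

Lemma hat_inj a b c a' b' c' :
  hat a b c = hat a' b' c' -> [/\ a = a', b = b' & c = c'].
Proof.
move=> /matrixP e; move: (e (o3 2) (o3 1)) (e (o3 0) (o3 2)) (e (o3 1) (o3 0)).
by rewrite !mxE.
Qed.

End Hat.

Lemma skew_hatE (K : numDomainType) (A : 'M[K]_3) :
  A^T = - A -> A = hat (A (o3 2) (o3 1)) (A (o3 0) (o3 2)) (A (o3 1) (o3 0)).
Proof.
move=> /matrixP skewA.
have antisym i j : A j i = - A i j by move: (skewA i j); rewrite !mxE.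
have diag0 i : A i i = 0.
  by apply/eqP; rewrite -eqNr -antisym.
apply/matrixP => i j; rewrite !mxE.
case: i => [[|[|[|//]]] i_lt]; case: j => [[|[|[|//]]] j_lt] /=;
  rewrite ?(bool_irrelevance i_lt isT) ?(bool_irrelevance j_lt isT) ?diag0 //;
  by rewrite antisym.
Qed.

(* The rewriting core of [simpc], which is much slower on large terms. *)
Ltac expand_complex := do ?
  [ rewrite -[- (_ +i* _)]/(_ +i* _)
  | rewrite -[(_ +i* _) - (_ +i* _)]/(_ +i* _)
  | rewrite -[(_ +i* _) + (_ +i* _)]/(_ +i* _)
  | rewrite -[(_ +i* _) * (_ +i* _)]/(_ +i* _) ].

Section Realification.
Variable R : realType.

Definition ccoord (u : 'rV[R]_6) (k : nat) : R[i] :=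
  match k with
  | 0 => u 0 (o6 0) +i* u 0 (o6 1)
  | 1 => u 0 (o6 2) +i* u 0 (o6 3)
  | _ => u 0 (o6 4) +i* u 0 (o6 5)
  end.

Lemma ccoordD (a : R) u v k : ccoord (a *: u + v) k = a%:C * ccoord u k + ccoord v k.
Proof.
by case: k => [|[|k]]; rewrite /ccoord !mxE -complexr0; expand_complex; congr Complex; ring.
Qed.

Lemma ccoord_inj u v : (forall k, ccoord u k = ccoord v k) -> u = v.
Proof.
move=> e; move: (e 0%N) (e 1%N) (e 2%N) => -[e0 e1] [e2 e3] [e4 e5].
apply/matrixP => a j; rewrite (ord1 a).
by case: j => [[|[|[|[|[|[|//]]]]]] j_lt]; rewrite (bool_irrelevance j_lt isT).
Qed.

Lemma ccoord_surj z0 z1 z2 :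
  exists u, [/\ ccoord u 0 = z0, ccoord u 1 = z1 & ccoord u 2 = z2].
Proof.
exists (\row_j match val j with
  | 0 => complex.Re z0 | 1 => complex.Im z0 | 2 => complex.Re z1
  | 3 => complex.Im z1 | 4 => complex.Re z2 | _ => complex.Im z2 end).
by rewrite /ccoord !mxE /=; case: z0; case: z1; case: z2.
Qed.

Lemma sum_ord6 (F : 'I_6 -> R) : \sum_(i < 6) F i =
  F (o6 0) + F (o6 1) + F (o6 2) + F (o6 3) + F (o6 4) + F (o6 5).
Proof.
rewrite !big_ord_recl big_ord0 addr0 !addrA.
by repeat congr (_ + _); congr F; apply: val_inj.
Qed.

Lemma ccoord_lie_bracket (X1 X2 c : R) u v :
  let m := - ((c * X2) +i* (c * X1)) in
  let w := lie_bracket X1 X2 c 0 c u v in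
  [/\ ccoord w 0 = m * (ccoord u 1 * ccoord v 2 - ccoord u 2 * ccoord v 1),
      ccoord w 1 = m * (ccoord u 2 * ccoord v 0 - ccoord u 0 * ccoord v 2) &
      ccoord w 2 = m * (ccoord u 0 * ccoord v 1 - ccoord u 1 * ccoord v 0)].
Proof.
rewrite /ccoord /lie_bracket !mxE !sum_ord6 /de /E /=.
by split; expand_complex; congr Complex; ring.
Qed.

Lemma lie_bracket_iso_so3C (X1 X2 c : R) : (X1 != 0) || (X2 != 0) -> c != 0 ->
  iso_so3C (lie_bracket X1 X2 c 0 c).
Proof.
move=> X_neq0 c_neq0; set m : R[i] := - ((c * X2) +i* (c * X1)).
have m_neq0 : m != 0.
  rewrite oppr_eq0 eq_complex /= !mulf_eq0 (negbTE c_neq0) /=.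
  by apply: contraL X_neq0 => /andP[/eqP -> /eqP ->]; rewrite eqxx.
pose phi u := hat (m * ccoord u 0) (m * ccoord u 1) (m * ccoord u 2).
exists phi; split.
- by move=> a u v; rewrite /phi !ccoordD -hat_scale_add; congr hat; ring.
- move=> u v /hat_inj[e0 e1 e2]; apply: ccoord_inj => -[|[|k]]; apply: (mulfI m_neq0) => //.
- by move=> u; rewrite /so3C /= /phi hat_skew.
- move=> A /skew_hatE ->.
  have [u [u0 u1 u2]] :=
    ccoord_surj (A (o3 2) (o3 1) / m) (A (o3 0) (o3 2) / m) (A (o3 1) (o3 0) / m).
  by exists u; rewrite /phi u0 u1 u2 ![m * (_ / m)]mulrC !divfK.
- move=> u v; have [b0 b1 b2] := ccoord_lie_bracket X1 X2 c u v.
  by rewrite /phi hat_commutator b0 b1 b2 -/m; congr hat; ring.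
Qed.

End Realification.

Lemma p101_iso_so3C (R : realType) (z : RP R 1 * RP R 2) : is_p101 z.2 ->
  iso_so3C (lie_bracket (x1 z) (x2 z) (y1 z) (y2 z) (y3 z)).
Proof.
case=> y2_0 y13; rewrite /y1 /y2 /y3 y2_0 y13.
apply: lie_bracket_iso_so3C; first exact: RP1_coord_neq0.
by have := RP2_coord_neq0 z.2; rewrite y2_0 y13 eqxx /= orbb.
Qed.

Theorem proposition3p18 (R : realType) :
  (* the half-flat space is, over the projection onto RP^2, the blow-up of RP^2
     at [1:0:1]: it is identified with the standard model by a projective
     automorphism of the RP^1 factor, compatibly with the second projection *)
  (exists M : 'M[R]_2, M \in unitmx /\
     forall z : RP R 1 * RP R 2,
       halfflat_set z <-> blowup101 (projmap M z.1, z.2)) /\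
  (* in particular it is connected *)
  connected (@halfflat_set R) /\
  (* the points over [1:0:1] are exactly the Hermitian ones *)
  (forall z : RP R 1 * RP R 2, halfflat_set z ->
     (is_p101 z.2 <-> hermitian_str z)) /\
  (* and the underlying Lie algebra is then so(3,C) *)
  (forall z : RP R 1 * RP R 2, halfflat_set z -> is_p101 z.2 ->
     iso_so3C (lie_bracket (x1 z) (x2 z) (y1 z) (y2 z) (y3 z))).
Proof.
split; first by exists (rot90 R); split; [exact: rot90_unitmx | exact: halfflat_blowup101].
split; first exact: connected_halfflat.
split; first exact: halfflat_hermitian.
by move=> z _; exact: p101_iso_so3C.
Qed.
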